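(* There exist instances (with three advertisers, a joint distribution of their values, information structures with and without the data, and a price of the data) of the two-stage game in which advertisers first simultaneously decide whether to purchase a data source and then bid optimally in a second-price auction, such that the purchase-stage game has no pure strategy equilibrium.
   Context: In the purchase stage each advertiser pays a fixed price for the data if she buys it; buying the data reveals (more) information about her value. Afterwards, each advertiser bids in a second-price auction given her information, and payoffs are expected auction utility minus the price paid for data. *)

From HB Require Import structures.
From mathcomp Require Import all_boot all_order all_algebra.
Set Implicit Arguments. Unset Strict Implicit. Unset Printing Implicit Defensive.
Import Order.TTheory GRing.Theory Num.Theory.
Local Open Scope ring_scope.

(* Information structures are signal
   functions [sig i : Omega -> S]: advertiser i observes [sig i w]. *)

Section Game.
Variables (Omega S : finType) (p : Omega -> rat).

Definition cond_exp (f : Omega -> rat) (sig : Omega -> S) (w : Omega) : rat :=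
  (\sum_(x | sig x == sig w) p x * f x) / (\sum_(x | sig x == sig w) p x).

Variables (v : 'I_3 -> Omega -> rat)
          (sig0 sig1 : 'I_3 -> Omega -> S)     (* info without / with data *)
          (c : rat).

(* Purchase profile a : a i = true iff advertiser i buys the data. *)
Definition info (a : 'I_3 -> bool) (i : 'I_3) : Omega -> S :=
  if a i then sig1 i else sig0 i.

(* Optimal (truthful) bid in the second-price auction: the expected value
   conditional on one's information. *)
Definition bid (a : 'I_3 -> bool) (i : 'I_3) (w : Omega) : rat :=
  cond_exp (v i) (info a i) w.

(* Second-price auction, highest bid wins, ties broken uniformly at random,
   winner pays the highest competing bid.  Ex-post expected utility of i. *)
Definition spa_util (b : 'I_3 -> rat) (i : 'I_3) (vi : rat) : rat :=
  let W := [set j : 'I_3 | [forall k : 'I_3, b k <= b j]] in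
  let second := \big[Num.max/0]_(j < 3 | j != i) b j in
  if i \in W then (vi - second) / (#|W|)%:R else 0.

Definition auction_payoff (a : 'I_3 -> bool) (i : 'I_3) : rat :=
  \sum_(w : Omega) p w * spa_util (fun j => bid a j w) i (v i w).

Definition payoff (a : 'I_3 -> bool) (i : 'I_3) : rat :=
  auction_payoff a i - (if a i then c else 0).

Definition deviate (a : 'I_3 -> bool) (i : 'I_3) (x : bool) : 'I_3 -> bool :=
  fun j => if j == i then x else a j.

Definition pure_NE (a : 'I_3 -> bool) : Prop :=
  forall (i : 'I_3) (x : bool), payoff (deviate a i x) i <= payoff a i.

End Game.

Definition valid_instance (Omega S : finType) (p : Omega -> rat)
    (v : 'I_3 -> Omega -> rat) (sig0 sig1 : 'I_3 -> Omega -> S) (c : rat) : Prop :=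
  [/\ (forall w, 0 <= p w),
      \sum_(w : Omega) p w = 1,
      (forall i w, 0 <= v i w),
      (* the data reveals (weakly) more information: sig1 i refines sig0 i *)
      (forall i w w', sig1 i w = sig1 i w' -> sig0 i w = sig0 i w')
    & 0 <= c].

From HB Require Import structures.
From mathcomp Require Import all_boot all_order all_algebra.
From Stdlib Require Import FunctionalExtensionality.
Set Implicit Arguments. Unset Strict Implicit. Unset Printing Implicit Defensive.
Import Order.TTheory GRing.Theory Num.Theory.
Local Open Scope ring_scope.

(* Advertiser 2
   bids at most 1/2 while each rival bids at least 1, so it never wins and
   buying the data is a pure loss for it.  With advertiser 2 out of the data
   market, advertisers 0 and 1 play matching pennies: advertiser 0 gains from
   the data exactly when advertiser 1 holds it, advertiser 1 exactly when
   advertiser 0 does not.  Hence every purchase profile has a strictly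
   profitable unilateral deviation. *)

Definition o0 : 'I_3 := @Ordinal 3 0 isT.
Definition o1 : 'I_3 := @Ordinal 3 1 isT.
Definition o2 : 'I_3 := @Ordinal 3 2 isT.

Lemma ord3_cases (k : 'I_3) : k = o0 \/ k = o1 \/ k = o2.
Proof.
case: k => [[|[|[|//]]] lt_k3]; [left | right; left | right; right];
  exact: val_inj.
Qed.

Lemma index_enum_ord3 : index_enum 'I_3 = [:: o0; o1; o2].
Proof.
apply: (inj_map val_inj); rewrite /index_enum unlock /= -enumT.
exact: val_enum_ord.
Qed.

Lemma forall_ord3 (P : pred 'I_3) : [forall k, P k] = [&& P o0, P o1 & P o2].
Proof.
apply/forallP/and3P => [P_all | [P0 P1 P2] k]; first by split; apply: P_all.
by case: (ord3_cases k) => [->|[->|->]].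
Qed.

Lemma card_set_ord3 (P : pred 'I_3) :
  #|[set j : 'I_3 | P j]| = (P o0 + P o1 + P o2)%N.
Proof.
rewrite cardsE -sum1_card unlock index_enum_ord3 /= -!topredE /=.
by case: (P o0); case: (P o1); case: (P o2).
Qed.

Lemma spa_util_ord3 (b : 'I_3 -> rat) i vi :
  let top j := [&& b o0 <= b j, b o1 <= b j & b o2 <= b j] in
  spa_util b i vi =
    if top i then (vi - \big[Num.max/0]_(j < 3 | j != i) b j)
                    / (top o0 + top o1 + top o2)%:R
    else 0.
Proof. by rewrite /spa_util /= inE card_set_ord3 !forall_ord3. Qed.

Definition profile (x y z : bool) : 'I_3 -> bool :=
  fun i => match val i with 0%N => x | 1%N => y | _ => z end.

Lemma profile_eta (a : 'I_3 -> bool) : a = profile (a o0) (a o1) (a o2).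
Proof. by apply: functional_extensionality => k; case: (ord3_cases k) => [->|[->|->]]. Qed.

Section Deviation.
Variables (Omega S : finType) (p : Omega -> rat) (v : 'I_3 -> Omega -> rat).
Variables (sig0 sig1 : 'I_3 -> Omega -> S) (c : rat).

Lemma not_pure_NE_deviate a i x :
  payoff p v sig0 sig1 c a i < payoff p v sig0 sig1 c (deviate a i x) i ->
  ~ pure_NE p v sig0 sig1 c a.
Proof. by move=> gain /(_ i x); rewrite leNgt gain. Qed.

End Deviation.

Definition ex_prob (w : 'I_3) : rat := 3%:R^-1.

(* Row i lists the values of advertiser i in states 0, 1, 2. *)
Definition ex_value (i w : 'I_3) : rat :=
  (nth 0 (nth [::] [:: [:: 2; 2; 0]; [:: 0; 3; 2]; [:: 0; 0; 1]] i) w)%:R.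

Definition ex_signal_prior (i : 'I_3) (w : 'I_3) : bool := false.

Definition ex_signal_data (i : 'I_3) (w : 'I_3) : bool :=
  w == (if i == o1 then o1 else o0).

Definition ex_price : rat := 8%:R^-1.

Local Notation ex_payoff :=
  (payoff ex_prob ex_value ex_signal_prior ex_signal_data ex_price).

Lemma ex_valid :
  valid_instance ex_prob ex_value ex_signal_prior ex_signal_data ex_price.
Proof.
split=> //; rewrite ?invr_ge0 ?ler0n //.
by rewrite sumr_const card_ord -[_ *+ 3]mulr_natr mulVf.
Qed.

Ltac compute_payoffs :=
  rewrite /payoff /auction_payoff unlock index_enum_ord3 /= !spa_util_ord3
          /bid /cond_exp /info unlock index_enum_ord3;
  by vm_compute.

Lemma ex_auction_payoff2 a :
  auction_payoff ex_prob ex_value ex_signal_prior ex_signal_data a o2 = 0.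
Proof.
apply/eqP; rewrite (profile_eta a).
by case: (a o0); case: (a o1); case: (a o2); compute_payoffs.
Qed.

Lemma ex_payoff2_abstain (a : 'I_3 -> bool) :
  a o2 -> ex_payoff a o2 < ex_payoff (deviate a o2 false) o2.
Proof.
move=> a2; rewrite /payoff !ex_auction_payoff2 a2 /deviate eqxx.
by rewrite sub0r oppr_lt0 invr_gt0 ltr0n.
Qed.

Lemma ex_payoff0_follow x y : x != y ->
  ex_payoff (profile x y false) o0 <
  ex_payoff (deviate (profile x y false) o0 y) o0.
Proof. by case: x; case: y => // _; compute_payoffs. Qed.

Lemma ex_payoff1_avoid x :
  ex_payoff (profile x x false) o1 <
  ex_payoff (deviate (profile x x false) o1 (~~ x)) o1.
Proof. by case: x; compute_payoffs. Qed.

Theorem mainTheorem11 :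
  exists (Omega S : finType) (p : Omega -> rat) (v : 'I_3 -> Omega -> rat)
         (sig0 sig1 : 'I_3 -> Omega -> S) (c : rat),
    valid_instance p v sig0 sig1 c /\
    forall a : 'I_3 -> bool, ~ pure_NE p v sig0 sig1 c a.
Proof.
exists 'I_3, bool, ex_prob, ex_value, ex_signal_prior, ex_signal_data, ex_price.
split; first exact: ex_valid.
move=> a; case a2: (a o2); first exact: not_pure_NE_deviate (ex_payoff2_abstain a2).
rewrite (profile_eta a) a2; case: (eqVneq (a o0) (a o1)) => [<- | neq01].
- exact: not_pure_NE_deviate (ex_payoff1_avoid (a o0)).
- exact: not_pure_NE_deviate (ex_payoff0_follow neq01).
Qed.
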